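(* Let $R$ be a Noetherian local ring, $I,J$ ideals of $R$ and $K\subseteq I$ an ideal. Let $\bar J=(J+K)/K$ and $\bar I=I/K$ in $R/K$. Then $\operatorname{ar}_{\bar J}(\bar I)\le\operatorname{ar}_J(I)$.
   Context: For ideals $\mathfrak a,\mathfrak b$ of a Noetherian local ring, $\operatorname{ar}_{\mathfrak b}(\mathfrak a)$ is the least $c$ such that $\mathfrak b^n\cap\mathfrak a=\mathfrak b^{n-c}(\mathfrak b^c\cap\mathfrak a)$ for all $n\ge c$. *)

From HB Require Import structures.
From mathcomp Require Import all_boot all_algebra.
Set Implicit Arguments. Unset Strict Implicit. Unset Printing Implicit Defensive.
Import GRing.Theory.
Local Open Scope ring_scope.

Definition is_ideal (R : comPzRingType) (a : R -> Prop) : Prop :=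
  a 0 /\ (forall x y, a x -> a y -> a (x + y)) /\ (forall r x, a x -> a (r * x)).

Definition seteq (R : Type) (a b : R -> Prop) : Prop := forall x, a x <-> b x.
Definition subs (R : Type) (a b : R -> Prop) : Prop := forall x, a x -> b x.

Definition idealI (R : Type) (a b : R -> Prop) : R -> Prop := fun x => a x /\ b x.
Definition idealD (R : comPzRingType) (a b : R -> Prop) : R -> Prop :=
  fun x => exists y z, a y /\ b z /\ x = y + z.
Definition idealM (R : comPzRingType) (a b : R -> Prop) : R -> Prop :=
  fun x => exists s : seq (R * R),
    (forall p, p \in s -> a p.1 /\ b p.2) /\ x = \sum_(p <- s) p.1 * p.2.

Fixpoint idealX (R : comPzRingType) (b : R -> Prop) (n : nat) : R -> Prop :=
  match n with
  | 0 => fun _ => True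
  | n'.+1 => idealM (idealX b n') b
  end.

Definition img (R S : Type) (f : R -> S) (a : R -> Prop) : S -> Prop :=
  fun y => exists x, a x /\ f x = y.

Definition ar_prop (R : comPzRingType) (b a : R -> Prop) (c : nat) : Prop :=
  forall n, (c <= n)%N ->
    seteq (idealI (idealX b n) a) (idealM (idealX b (n - c)) (idealI (idealX b c) a)).

Definition is_ar (R : comPzRingType) (b a : R -> Prop) (c : nat) : Prop :=
  ar_prop b a c /\ forall c', ar_prop b a c' -> (c <= c')%N.

Definition is_maximal (R : comPzRingType) (m : R -> Prop) : Prop :=
  is_ideal m /\ ~ m 1 /\
  forall a, is_ideal a -> subs m a -> ~ a 1 -> seteq a m.

Definition local_ring (R : comPzRingType) : Prop :=
  exists m : R -> Prop, is_maximal m /\ forall m', is_maximal m' -> seteq m' m.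

Definition noetherian (R : comPzRingType) : Prop :=
  forall ch : nat -> R -> Prop, (forall n, is_ideal (ch n)) ->
    (forall n, subs (ch n) (ch n.+1)) ->
    exists N, forall n, (N <= n)%N -> seteq (ch n) (ch N).

(* Since the kernel K of f lies in I, taking images under the surjection f
   commutes with products, powers and intersection with I, and f(J + K) = f(J).
   So the image of each Artin-Rees equation J^n ∩ I = J^(n-c) (J^c ∩ I) is the
   corresponding equation for f(J + K) and f(I): every exponent that works for
   (J, I) works for the images, and the least one can only drop. *)

From HB Require Import structures.
From mathcomp Require Import all_boot all_algebra.
From Stdlib Require Import Classical FunctionalExtensionality PropExtensionality.
From Stdlib Require Wf_nat.
Import GRing.Theory.
Set Implicit Arguments.
Local Open Scope ring_scope.

Lemma seteq_eq (T : Type) (a b : T -> Prop) : seteq a b -> a = b.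
Proof.
move=> ab; apply: functional_extensionality => x.
exact: propositional_extensionality.
Qed.

Section Image.
Variables (R S : comPzRingType) (f : {rmorphism R -> S}).

Lemma img_idealM (a b : R -> Prop) :
  img f (idealM a b) = idealM (img f a) (img f b).
Proof.
apply: seteq_eq => y; split.
  move=> [_ [[s [Hs ->]] <-]].
  exists [seq (f p.1, f p.2) | p <- s]; split.
    by move=> _ /mapP [p /Hs [ap bp] ->]; split; [exists p.1 | exists p.2].
  by rewrite big_map rmorph_sum; apply: eq_bigr => p _; rewrite rmorphM.
move=> [s [Hs ->]]; elim: s Hs => [|[y1 y2] s IH] Hs.
  by exists 0; rewrite big_nil rmorph0; split=> //; exists [::]; rewrite big_nil.
have /= [[x1 [ax1 <-]] [x2 [bx2 <-]]] := Hs _ (mem_head _ _).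
have [z [[t [Ht ->]] fz]] : img f (idealM a b) (\sum_(q <- s) q.1 * q.2).
  by apply: IH => q qs; apply: Hs; rewrite in_cons qs orbT.
exists (x1 * x2 + \sum_(q <- t) q.1 * q.2); split.
  exists ((x1, x2) :: t); rewrite big_cons; split=> // q.
  by rewrite in_cons => /orP [/eqP -> | /Ht].
by rewrite !big_cons rmorphD rmorphM fz.
Qed.

Lemma img_idealI (a I : R -> Prop) :
  (forall x y, I x -> I y -> I (x + y)) -> (forall x, f x = 0 -> I x) ->
  img f (idealI a I) = idealI (img f a) (img f I).
Proof.
move=> ID kerI; apply: seteq_eq => y; split.
  by move=> [x [[ax Ix] <-]]; split; exists x.
move=> [[x [ax <-]] [i [Ii fi]]]; exists x; split=> //; split=> //.
by rewrite -(subrK i x); apply: ID => //; apply: kerI; rewrite rmorphB fi subrr.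
Qed.

Lemma img_idealD_ker (J K : R -> Prop) :
  K 0 -> (forall k, K k -> f k = 0) -> img f (idealD J K) = img f J.
Proof.
move=> K0 fK; apply: seteq_eq => y; split.
  move=> [_ [[j [k [Jj [Kk ->]]]] <-]].
  by exists j; rewrite rmorphD (fK k Kk) addr0.
by move=> [j [Jj <-]]; exists j; split=> //; exists j, 0; rewrite addr0.
Qed.

Hypothesis f_surj : forall y : S, exists x, f x = y.

Lemma img_idealX (b : R -> Prop) (n : nat) :
  img f (idealX b n) = idealX (img f b) n.
Proof.
elim: n => [|n IH] /=; last by rewrite img_idealM IH.
by apply: seteq_eq => y; split=> // _; have [x <-] := f_surj y; exists x.
Qed.

Lemma ar_prop_img (b I : R -> Prop) (c : nat) :
  (forall x y, I x -> I y -> I (x + y)) -> (forall x, f x = 0 -> I x) ->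
  ar_prop b I c -> ar_prop (img f b) (img f I) c.
Proof.
move=> ID kerI ar n cn.
by rewrite -!img_idealX -!img_idealI // -img_idealM (seteq_eq (ar n cn)).
Qed.

End Image.

Lemma exists_is_ar (R : comPzRingType) (b a : R -> Prop) (c : nat) :
  ar_prop b a c -> exists c', is_ar b a c' /\ (c' <= c)%N.
Proof.
move=> arc.
have [m [[arm least] _]] :=
  @Wf_nat.dec_inh_nat_subset_has_unique_least_element (ar_prop b a)
  (fun n => classic (ar_prop b a n)) (ex_intro _ c arc).
by exists m; split; [split=> // c' /least/leP | apply/leP/least].
Qed.

Theorem lemma2p6 (R S : comPzRingType) (f : {rmorphism R -> S})
  (I J K : R -> Prop) :
  noetherian R -> local_ring R ->
  is_ideal I -> is_ideal J -> is_ideal K -> subs K I ->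
  (forall y : S, exists x, f x = y) ->
  (forall x, f x = 0 <-> K x) ->
  forall c : nat, is_ar J I c ->
  exists c' : nat, is_ar (img f (idealD J K)) (img f I) c' /\ (c' <= c)%N.
Proof.
move=> _ _ [_ [ID _]] _ [K0 _] KI f_surj kerK c [arc _].
apply: exists_is_ar.
rewrite img_idealD_ker //; last by move=> k /kerK.
by apply: ar_prop_img => // x /kerK /KI.
Qed.
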